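(* Let $G$ be a graph on $n'\geq n$ vertices and let $H\subseteq G$ be a complete subgraph $H\cong K_n$. Consider a game on $E(G)$ in which Red and Blue alternately claim previously unclaimed edges, one per turn, and suppose that at the moment Red starts claiming edges there is a vertex $v\in V(H)$ with $d_B(v)\geq 1$, but Blue has claimed at most one edge of $E(H)$. Then Red can ensure that, for all $1\leq j\leq n/2-1$, immediately after her $j$-th move her graph (within $H$) is a matching consisting of $j$ edges and $D_j\leq 1$. Moreover, if $D_k=1$ for some $1\leq k\leq n/2-1$, then $D_j=1$ for all $k\leq j\leq n/2-1$.
   Context: $R$ and $B$ denote the graphs formed by the edges claimed so far by Red and Blue respectively; $d_B(v)$ is the degree of $v$ in $B$. For $v\in V(H)$, $d_B^H(v)$ (resp. $d_R^H(v)$) is the number of Blue (resp. Red) edges joining $v$ to other vertices of $H$. A vertex $v\in V(H)$ is H-distinct if $d_B^H(v)\geq 1$ and $d_R^H(v)=0$. $D_j$ denotes the number of H-distinct vertices immediately after Red's $j$-th move. *)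

From mathcomp Require Import all_boot.
Set Implicit Arguments. Unset Strict Implicit. Unset Printing Implicit Defensive.

Section Game.
Variable V : finType.
Implicit Types (EG R B M : {set {set V}}) (S : {set V}) (e : {set V}).

Definition simple_graph EG := forall e, e \in EG -> #|e| = 2.

(* H = G[S] is complete: every pair of distinct vertices of S is an edge of G *)
Definition complete_on EG S :=
  forall x y, x \in S -> y \in S -> x != y -> [set x; y] \in EG.

(* d_B(v) >= 1 in the whole graph *)
Definition has_blue_edge B (v : V) := exists2 e, e \in B & v \in e.

Definition degH (X : {set {set V}}) S (v : V) := #|[set e in X | (e \subset S) && (v \in e)]|.

Definition insideH (X : {set {set V}}) S : {set {set V}} := [set e in X | e \subset S].

Definition Hdistinct R B S (v : V) :=
  [&& v \in S, 0 < degH B S v & degH R S v == 0].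

Definition Dcount R B S := #|[set v | Hdistinct R B S v]|.

Definition is_matching M :=
  forall e f, e \in M -> f \in M -> e != f -> [disjoint e & f].

(* The play from the moment Red starts: Red moves first, then Blue, alternately.
   Red's (deterministic, history-dependent) strategy sigma maps the list of
   Blue's moves made so far (since Red started) to Red's next edge.
   b i (i = 0,1,...) is Blue's reply to Red's (i+1)-th move. *)
Definition red_move (sigma : seq {set V} -> {set V}) (b : nat -> {set V}) (j : nat) :=
  sigma (map b (iota 0 j.-1)).

(* Red's edges after her j-th move (moves 1..j); Red had no edges initially *)
Definition red_after sigma b (j : nat) : {set {set V}} :=
  [set red_move sigma b (nat_of_ord k).+1 | k : 'I_j].

Definition blue_after (B0 : {set {set V}}) (b : nat -> {set V}) (m : nat) : {set {set V}} :=
  B0 :|: [set b (nat_of_ord i) | i : 'I_m].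

Definition red_legal EG B0 sigma b (j : nat) :=
  (red_move sigma b j \in EG) /\
  (red_move sigma b j \notin red_after sigma b j.-1 :|: blue_after B0 b j.-1).

Definition blue_legal EG B0 sigma b (i : nat) :=
  (b i \in EG) /\ (b i \notin red_after sigma b i.+1 :|: blue_after B0 b i).

(* D_j : number of H-distinct vertices immediately after Red's j-th move *)
Definition D_after B0 sigma b S (j : nat) :=
  Dcount (red_after sigma b j) (blue_after B0 b j.-1) S.

End Game.

From mathcomp Require Import all_boot zify.
Set Implicit Arguments. Unset Strict Implicit. Unset Printing Implicit Defensive.

(* Red keeps her graph a matching of H disjoint from Blue's graph and, after
   each of her moves, leaves at most one H-distinct vertex.  A single Blue edge
   then makes at most two new vertices H-distinct, and if there are three
   H-distinct vertices the old one z is not Blue-adjacent to the new ones.  Red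
   answers by covering z together with a new one (three H-distinct vertices),
   one H-distinct vertex together with a vertex that is not (two), or two
   vertices that are not H-distinct (at most one); in each case exactly
   min(D, 1) H-distinct vertices survive, which gives both D_j <= 1 and the
   persistence of D_j = 1. *)

Lemma imset_ord0 (T : finType) (F : nat -> T) : [set F (nat_of_ord k) | k : 'I_0] = set0.
Proof. by apply/setP => x; rewrite in_set0; apply/imsetP => -[[]]. Qed.

Lemma imset_ord_recr (T : finType) (F : nat -> T) j :
  [set F (nat_of_ord k) | k : 'I_j.+1] = F j |: [set F (nat_of_ord k) | k : 'I_j].
Proof.
apply/setP=> x; apply/imsetP/setU1P.
- case=> k _ ->; case: (ltnP k j) => hk.
  + by right; apply/imsetP; exists (Ordinal hk).
  + by left; have -> : nat_of_ord k = j by have := ltn_ord k; lia.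
- case=> [->|/imsetP [k _ ->]]; first by exists ord_max.
  by exists (widen_ord (leqnSn j) k).
Qed.

Section Distinct.
Variables (V : finType) (S : {set V}).
Implicit Types (X R B : {set {set V}}) (b e f : {set V}).

Lemma degH_gt0P X v :
  reflect (exists2 f, f \in X & (f \subset S) && (v \in f)) (0 < degH X S v).
Proof.
rewrite /degH card_gt0; apply: (iffP (set0Pn _)) => [[f]|[f fX hf]].
- by rewrite inE => /andP[fX hf]; exists f.
- by exists f; rewrite inE fX.
Qed.

Lemma degH_setU1 X e v :
  (0 < degH (e |: X) S v) = ((e \subset S) && (v \in e)) || (0 < degH X S v).
Proof.
apply/degH_gt0P/orP.
- case=> f; rewrite in_setU1 => /orP[/eqP->|fX] hf; first by left.
  by right; apply/degH_gt0P; exists f.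
- case=> [h|/degH_gt0P[f fX hf]]; first by exists e; rewrite ?setU11.
  by exists f; rewrite ?setU1r.
Qed.

Definition red_free R := [set v in S | degH R S v == 0].

Definition distinct_set R B := [set v | Hdistinct R B S v].

Lemma red_freeP R v :
  reflect (v \in S /\ forall f, f \in R -> f \subset S -> v \notin f) (v \in red_free R).
Proof.
rewrite inE -leqn0 leqNgt; apply: (iffP andP) => -[vS h]; split=> //.
- by move=> f fR fS; apply: contraNN h => vf; apply/degH_gt0P; exists f; rewrite ?fS.
- by apply/degH_gt0P => -[f fR /andP[fS vf]]; move: vf; apply/negP/h.
Qed.

Lemma distinct_setE R B v :
  (v \in distinct_set R B) = (v \in red_free R) && (0 < degH B S v).
Proof. by rewrite !inE /Hdistinct -andbA [(_ == 0) && _]andbC. Qed.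

Lemma distinct_sub_free R B : distinct_set R B \subset red_free R.
Proof. by apply/subsetP => v; rewrite distinct_setE => /andP[]. Qed.

Lemma distinct_blue_edge R B x y : x \in red_free R -> y \in red_free R ->
  [set x; y] \in B -> x \in distinct_set R B.
Proof.
move=> xU yU xyB; rewrite distinct_setE xU; apply/degH_gt0P; exists [set x; y] => //.
have [xS _] := red_freeP _ _ xU; have [yS _] := red_freeP _ _ yU.
by rewrite set21 andbT subUset !sub1set xS yS.
Qed.

Lemma red_free_setU1 R e : e \subset S -> red_free (e |: R) = red_free R :\: e.
Proof.
move=> eS; apply/setP => v; rewrite !inE !eqn0Ngt degH_setU1 eS /=.
by case: (v \in e); rewrite ?andbF ?andbT.
Qed.

Lemma distinct_red_setU1 R B e : e \subset S ->
  distinct_set (e |: R) B = distinct_set R B :\: e.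
Proof.
move=> eS; apply/setP => v.
by rewrite in_setD !distinct_setE red_free_setU1 // in_setD andbA.
Qed.

Lemma distinct_blue_setU1 R B b v : (v \in distinct_set R (b |: B)) =
  (v \in distinct_set R B) || [&& v \in red_free R, b \subset S & v \in b].
Proof.
rewrite !distinct_setE degH_setU1.
by case: (v \in red_free R); rewrite //= orbC.
Qed.

Lemma distinct_blue_subset R B b : distinct_set R B \subset distinct_set R (b |: B).
Proof. by apply/subsetP => v vP; rewrite distinct_blue_setU1 vP. Qed.

Lemma distinct_blue_subsetU R B b :
  distinct_set R (b |: B) \subset distinct_set R B :|: b.
Proof.
apply/subsetP => v; rewrite distinct_blue_setU1 in_setU.
by case/orP=> [->|/and3P[_ _ ->]]; rewrite ?orbT.
Qed.

End Distinct.

Section RedMoves.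
Variables (V : finType) (S : {set V}).
Implicit Types (R B : {set {set V}}) (b e f : {set V}).
Local Notation U := (red_free S).
Local Notation P := (distinct_set S).

Definition inner_matching R :=
  [/\ forall f, f \in R -> f \subset S, is_matching R & #|U R| + #|R|.*2 = #|S|].

Lemma inner_matching0 : inner_matching set0.
Proof.
rewrite /inner_matching; have -> : U set0 = S.
  apply/setP => v; rewrite inE eqn0Ngt andbC; case: degH_gt0P => //= -[f].
  by rewrite in_set0.
by split=> [f|e f|]; rewrite ?in_set0 // cards0 addn0.
Qed.

Lemma inner_matching_setU1 R x y : inner_matching R -> x != y ->
  x \in U R -> y \in U R -> [set x; y] \notin R /\ inner_matching ([set x; y] |: R).
Proof.
case=> RS RM RU xy xU yU.
have [xS xR] := red_freeP _ _ _ xU; have [yS yR] := red_freeP _ _ _ yU.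
have xyS : [set x; y] \subset S by rewrite subUset !sub1set xS yS.
have xy_disj f : f \in R -> [disjoint [set x; y] & f].
  move=> fR; rewrite disjoint_sym disjoints_subset; apply/subsetP => v vf.
  rewrite !inE; apply: contraTN vf => /orP[]/eqP->.
  - exact: xR fR (RS f fR).
  - exact: yR fR (RS f fR).
have xyR : [set x; y] \notin R.
  by apply: contraTN isT => /xy_disj /pred0P /(_ x); rewrite /= set21.
split=> //; split.
- by move=> f; rewrite in_setU1 => /predU1P[->|/RS].
- move=> e f; rewrite !in_setU1 => /predU1P[->|eR] /predU1P[->|fR] //; rewrite ?eqxx //.
  + by move=> _; apply: xy_disj.
  + by move=> _; rewrite disjoint_sym; apply: xy_disj.
  + exact: RM.
- have xyU : [set x; y] \subset U R by rewrite subUset !sub1set xU yU.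
  have := subset_leq_card xyU.
  rewrite red_free_setU1 // cardsDS // cards2 xy cardsU1 (negbTE xyR); lia.
Qed.

(* The position Blue can leave after Red has reduced D to at most one. *)
Definition small_distinct R B :=
  #|P R B| <= 2 \/ exists2 z, z \in P R B &
    #|P R B| <= 3 /\ {in P R B, forall u, u != z -> [set z; u] \notin B}.

(* The last condition says both that at most one H-distinct vertex survives
   Red's move and that she never covers the last one. *)
Definition good_pair R B x y :=
  [&& x != y, x \in U R, y \in U R, [set x; y] \notin B &
      #|P R B :\: [set x; y]| == minn #|P R B| 1].

Lemma small_distinct_blue R B b : #|P R B| <= 1 -> #|b| <= 2 ->
  small_distinct R (b |: B).
Proof.
move=> P1 b2; have PbU := subset_trans (distinct_blue_subsetU S R B b).
case: (leqP #|P R (b |: B)| 2) => [|P3]; [by left | right].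
have [z Pz] : exists z, P R B = [set z].
  apply/cards1P; rewrite eqn_leq P1 card_gt0 /=; apply: contraTneq P3 => P0.
  by rewrite -leqNgt (leq_trans _ b2) // subset_leq_card // PbU // P0 set0U.
have zb : z \notin b.
  apply: contraTN P3 => zb; rewrite -leqNgt (leq_trans _ b2) // subset_leq_card //.
  by rewrite PbU // Pz subUset sub1set zb subxx.
have zP' : z \in P R (b |: B) by rewrite (subsetP (distinct_blue_subset _ _ _ b)) // Pz set11.
exists z => //; split.
  by rewrite (leq_trans (subset_leq_card (PbU _ (subxx _)))) // Pz cardsU1 zb; lia.
move=> u uP' uz; rewrite in_setU1 negb_or; apply/andP; split.
  by apply: contraNneq zb => <-; rewrite set21.
have /subsetP PU := distinct_sub_free S R (b |: B).
apply: contraNN uz => zuB; rewrite setUC in zuB.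
by move: (distinct_blue_edge (PU _ uP') (PU _ zP') zuB); rewrite Pz inE.
Qed.

Lemma good_pair_distinct R B z u : z \in P R B -> u \in U R -> u != z ->
  [set z; u] \notin B -> #|P R B :\ z :\ u| = 1 -> good_pair R B z u.
Proof.
move=> zP uU uz zuB P1; have /subsetP PU := distinct_sub_free S R B.
have /minn_idPr P1' : 1 <= #|P R B| by rewrite card_gt0; apply/set0Pn; exists z.
by rewrite /good_pair eq_sym uz PU // uU zuB -setDDl P1 P1'.
Qed.

Lemma good_pair_exists R B : 4 <= #|U R| -> small_distinct R B ->
  exists x y, good_pair R B x y.
Proof.
move=> U4 hs; have /subsetP PU := distinct_sub_free S R B.
have freeB x y : x \in U R -> y \in U R -> x \notin P R B -> [set x; y] \notin B.
  by move=> xU yU; apply: contraNN; apply: distinct_blue_edge.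
have cardUP : #|U R :\: P R B| = #|U R| - #|P R B| by rewrite cardsDS ?distinct_sub_free.
have PzP z u : z \in P R B -> #|P R B :\ z :\ u| = #|P R B| - 1 - (u \in P R B :\ z).
  by move=> zP; rewrite [#|P R B|](cardsD1 z) [#|P R B :\ z|](cardsD1 u) zP; lia.
case: (leqP #|P R B| 1) => [P1|P2].
  have /card_gt1P[x [y [xUP yUP xy]]] : 1 < #|U R :\: P R B| by lia.
  move: xUP yUP; rewrite !in_setD => /andP[xP xU] /andP[yP yU].
  exists x, y; rewrite /good_pair xy xU yU freeB //= (minn_idPl P1).
  suff /setDidPl -> : [disjoint P R B & [set x; y]] by [].
  by rewrite disjoint_sym disjoints_subset subUset !sub1set !in_setC xP yP.
case: (leqP #|P R B| 2) => [P2'|P3'].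
  have [z zP] : exists z, z \in P R B by apply/set0Pn; rewrite -card_gt0; lia.
  have [u uUP] : exists u, u \in U R :\: P R B by apply/set0Pn; rewrite -card_gt0; lia.
  move: uUP; rewrite in_setD => /andP[uP uU].
  exists z, u; apply: good_pair_distinct => //.
  - by apply: contraNneq uP => ->.
  - by rewrite setUC; apply: freeB => //; apply: PU.
  - by rewrite (PzP z u zP) in_setD1 (negbTE uP) andbF; lia.
case: hs => [|[z zP [P3 zB]]]; first by lia.
have [u uPz] : exists u, u \in P R B :\ z.
  by apply/set0Pn; rewrite -card_gt0; move: (cardsD1 z (P R B)); rewrite zP; lia.
move: (uPz); rewrite in_setD1 => /andP[uz uP].
exists z, u; apply: good_pair_distinct; rewrite ?PU ?zB //.
by rewrite (PzP z u zP) uPz; lia.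
Qed.

Lemma good_pair_move EG R B x y : complete_on EG S -> inner_matching R ->
  good_pair R B x y ->
  [/\ [set x; y] \in EG, [set x; y] \notin R :|: B, inner_matching ([set x; y] |: R),
      #|[set x; y] |: R| = #|R|.+1 & #|P ([set x; y] |: R) B| = minn #|P R B| 1].
Proof.
move=> EGS RM /and5P[xy xU yU xyB /eqP Pxy].
have [xyR RM'] := inner_matching_setU1 RM xy xU yU.
have [xS _] := red_freeP _ _ _ xU; have [yS _] := red_freeP _ _ _ yU.
split=> //.
- exact: EGS.
- by rewrite in_setU negb_or xyR.
- by rewrite cardsU1 xyR.
- by rewrite distinct_red_setU1 // subUset !sub1set xS yS.
Qed.

End RedMoves.

Section Strategy.
Variables (V : finType) (EG : {set {set V}}) (S : {set V}) (B0 : {set {set V}}).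
Hypotheses (EG_simple : simple_graph EG) (EG_complete : complete_on EG S).
Hypotheses (B0_EG : B0 \subset EG) (B0_inside : #|insideH B0 S| <= 1).
Implicit Types (R B : {set {set V}}) (b : nat -> {set V}).
Local Notation U := (red_free S).
Local Notation P := (distinct_set S).

Definition red_choice R B : {set V} :=
  if [pick p | good_pair S R B p.1 p.2] is Some p then [set p.1; p.2] else set0.

Lemma red_choice_move R B : inner_matching S R -> 4 <= #|U R| -> small_distinct S R B ->
  let e := red_choice R B in
  [/\ e \in EG, e \notin R :|: B, inner_matching S (e |: R),
      #|e |: R| = #|R|.+1 & #|P (e |: R) B| = minn #|P R B| 1].
Proof.
move=> RM U4 RB; rewrite /red_choice; case: pickP => [[x y] /= xy_good|none].
  exact: good_pair_move.
by have [x [y xy_good]] := good_pair_exists U4 RB; move: (none (x, y)); rewrite /= xy_good.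
Qed.

Fixpoint strategy_red b k : {set {set V}} :=
  if k is k'.+1 then red_choice (strategy_red b k') (blue_after B0 b k') |: strategy_red b k'
  else set0.

(* Red recomputes her own earlier moves from Blue's replies [s]. *)
Definition strategy (s : seq {set V}) : {set V} :=
  red_choice (strategy_red (nth set0 s) (size s)) (blue_after B0 (nth set0 s) (size s)).

Lemma blue_after_ext b b' m :
  (forall i, i < m -> b i = b' i) -> blue_after B0 b m = blue_after B0 b' m.
Proof. by move=> bb'; congr (_ :|: _); apply: eq_imset => i; apply: bb'. Qed.

Lemma strategy_red_ext b b' k :
  (forall i, i < k -> b i = b' i) -> strategy_red b k = strategy_red b' k.
Proof.
elim: k => [|k IH] //= bb'; have bb'k : (forall i, i < k -> b i = b' i).
  by move=> i ik; apply: bb'; rewrite ltnS ltnW.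
by rewrite IH // (blue_after_ext bb'k).
Qed.

Lemma blue_after0 b : blue_after B0 b 0 = B0.
Proof. by rewrite /blue_after imset_ord0 setU0. Qed.

Lemma blue_afterS b m : blue_after B0 b m.+1 = b m |: blue_after B0 b m.
Proof. by rewrite /blue_after imset_ord_recr setUCA. Qed.

Lemma red_move_strategy b k :
  red_move strategy b k.+1 = red_choice (strategy_red b k) (blue_after B0 b k).
Proof.
rewrite /red_move /strategy /= size_map size_iota.
have bk i : i < k -> nth set0 (map b (iota 0 k)) i = b i.
  by move=> ik; rewrite (nth_map 0) ?size_iota // nth_iota.
by rewrite (strategy_red_ext bk) (blue_after_ext bk).
Qed.

Lemma red_after_strategy b j : red_after strategy b j = strategy_red b j.
Proof.
pose F k := red_move strategy b k.+1.
elim: j => [|j IH]; first exact: (imset_ord0 F).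
by rewrite /red_after (imset_ord_recr F) -/(red_after strategy b j) IH /F red_move_strategy.
Qed.

Lemma small_distinct_start : small_distinct S set0 B0.
Proof.
left; have cover v : v \in P set0 B0 -> exists2 f, f \in insideH B0 S & v \in f.
  by rewrite distinct_setE => /andP[_ /degH_gt0P[f fB /andP[fS vf]]]; exists f; rewrite ?inE ?fB.
case: (posnP #|insideH B0 S|) => [/eqP|inside_pos].
  rewrite cards_eq0 => /eqP inside0; suff -> : P set0 B0 = set0 by rewrite cards0.
  by apply/setP => v; rewrite in_set0; apply/negP => /cover[f]; rewrite inside0 in_set0.
have /cards1P[f0 inside_f0] : #|insideH B0 S| == 1 by rewrite eqn_leq B0_inside.
have /setIdP[f0B _] : f0 \in insideH B0 S by rewrite inside_f0 set11.
rewrite -(EG_simple (subsetP B0_EG _ f0B)) subset_leq_card //; apply/subsetP => v.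
by case/cover => f; rewrite inside_f0 inE => /eqP ->.
Qed.

Lemma strategy_invariant b j : j.*2 + 2 <= #|S| -> (forall i, i < j -> b i \in EG) ->
  [/\ inner_matching S (strategy_red b j), #|strategy_red b j| = j &
      small_distinct S (strategy_red b j) (blue_after B0 b j)].
Proof.
elim: j => [|j IH] Sj bEG.
  by rewrite blue_after0 cards0; split; [exact: inner_matching0 | | exact: small_distinct_start].
rewrite doubleS in Sj.
have [RM Rcard RB] := IH (ltnW (ltnW Sj)) (fun i ij => bEG i (ltnW ij)).
have U4 : 4 <= #|U (strategy_red b j)| by case: RM => _ _; lia.
have [_ _ RM' Rcard' Pmin] := red_choice_move RM U4 RB.
split=> //=; first by rewrite Rcard' Rcard.
rewrite blue_afterS; apply: small_distinct_blue; first by rewrite Pmin geq_minr.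
by rewrite EG_simple ?bEG.
Qed.

Lemma strategy_step b j : j.*2 + 4 <= #|S| -> (forall i, i < j -> b i \in EG) ->
  let e := red_choice (strategy_red b j) (blue_after B0 b j) in
  [/\ e \in EG, e \notin strategy_red b j :|: blue_after B0 b j,
      inner_matching S (strategy_red b j.+1), #|strategy_red b j.+1| = j.+1 &
      #|P (strategy_red b j.+1) (blue_after B0 b j)|
        = minn #|P (strategy_red b j) (blue_after B0 b j)| 1].
Proof.
move=> Sj bEG; have Sj' : j.*2 + 2 <= #|S| by lia.
have [RM Rcard RB] := strategy_invariant Sj' bEG.
have U4 : 4 <= #|U (strategy_red b j)| by case: RM => _ _; lia.
have [eEG eN RM' Rcard' Pmin] := red_choice_move RM U4 RB.
by split=> //; rewrite /= ?Rcard' ?Rcard.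
Qed.

Lemma strategy_distinct_stable b k j : k <= j -> j.*2 + 4 <= #|S| ->
  (forall i, i < j -> b i \in EG) ->
  #|P (strategy_red b k.+1) (blue_after B0 b k)| = 1 ->
  #|P (strategy_red b j.+1) (blue_after B0 b j)| = 1.
Proof.
move=> + + + Pk; elim: j => [|j IH]; first by rewrite leqn0 => /eqP k0 _ _; move: Pk; rewrite k0.
rewrite leq_eqVlt => /predU1P[kj _ _|]; first by move: Pk; rewrite kj.
rewrite ltnS => kj Sj bEG.
have Sj' : j.*2 + 4 <= #|S| by rewrite doubleS in Sj; lia.
have {}IH := IH kj Sj' (fun i ij => bEG i (ltnW ij)).
have [_ _ _ _ ->] := strategy_step Sj bEG; apply/minn_idPr.
rewrite -IH blue_afterS.
exact: subset_leq_card (distinct_blue_subset _ _ _ _).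
Qed.

End Strategy.

Theorem lemma2p4 (V : finType) (EG : {set {set V}}) (S : {set V}) (n : nat)
    (B0 : {set {set V}}) :
  simple_graph EG ->
  #|S| = n ->
  complete_on EG S ->
  B0 \subset EG ->
  (exists2 v, v \in S & has_blue_edge B0 v) ->
  #|insideH B0 S| <= 1 ->
  exists sigma : seq {set V} -> {set V},
    forall (b : nat -> {set V}) (j : nat),
      0 < j -> j.*2 + 2 <= n ->
      (forall i, i < j.-1 -> blue_legal EG B0 sigma b i) ->
      [/\ red_legal EG B0 sigma b j,
          #|insideH (red_after sigma b j) S| = j,
          is_matching (insideH (red_after sigma b j) S),
          D_after B0 sigma b S j <= 1
        & forall k, 0 < k -> k <= j -> D_after B0 sigma b S k = 1 ->
            D_after B0 sigma b S j = 1].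
Proof.
(* Red's strategy does not need the Blue edge at a vertex of H. *)
move=> EG_simple <- EG_complete B0_EG _ B0_inside.
exists (strategy S B0) => b [//|j] _ Sj blue_ok.
have bEG i : i < j -> b i \in EG by case/blue_ok.
have Sj' : j.*2 + 4 <= #|S| by rewrite doubleS in Sj; lia.
have [eEG eN [RS RM _] Rcard Pmin] :=
  strategy_step EG_simple EG_complete B0_EG B0_inside Sj' bEG.
have inside : insideH (strategy_red S B0 b j.+1) S = strategy_red S B0 b j.+1.
  by apply/setP => e; rewrite inE andb_idr //; apply: RS.
have D_afterE k : D_after B0 (strategy S B0) b S k =
    #|distinct_set S (strategy_red S B0 b k) (blue_after B0 b k.-1)|.
  by rewrite /D_after /Dcount red_after_strategy.
rewrite /red_legal red_move_strategy !red_after_strategy inside.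
split=> //; first by rewrite D_afterE /= Pmin geq_minr.
move=> [//|k] _; rewrite ltnS !D_afterE => kj.
exact: (strategy_distinct_stable EG_simple EG_complete B0_EG B0_inside kj Sj' bEG).
Qed.
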